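(* If $S$ is a cyclotomic numerical semigroup, then $\mathrm P_S$ is selfreciprocal, i.e. $x^{\deg \mathrm P_S}\,\mathrm P_S(1/x)=\mathrm P_S(x)$.
   Context: A numerical semigroup is a submonoid $S$ of $(\mathbb N,+)$ with $\mathbb N\setminus S$ finite; its semigroup polynomial is $\mathrm P_S(x)=(1-x)\sum_{s\in S}x^s$. $S$ is cyclotomic if $\mathrm P_S$ (a monic integer polynomial) has all its complex roots in the closed unit disc. *)

From HB Require Import structures.
From mathcomp Require Import all_boot all_order all_algebra all_field.
Set Implicit Arguments. Unset Strict Implicit. Unset Printing Implicit Defensive.
Import Order.TTheory GRing.Theory Num.Theory.
Local Open Scope ring_scope.

(* A numerical semigroup: a submonoid of (nat,+) with finite complement.
   Finiteness of the complement is witnessed by a bound beyond which every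
   natural number lies in S. *)
Record numerical_semigroup := NumSemigroup {
  nsg_mem : pred nat;
  nsg_0 : nsg_mem 0%N;
  nsg_add : forall a b, nsg_mem a -> nsg_mem b -> nsg_mem (a + b)%N;
  nsg_bound : nat;
  nsg_boundP : forall n, (nsg_bound <= n)%N -> nsg_mem n
}.

(* Coefficient of x^i in the power series (1 - x) * sum_{s in S} x^s. *)
Definition sgp_coef (S : numerical_semigroup) (i : nat) : int :=
  (nsg_mem S i)%:Z - (if i is j.+1 then (nsg_mem S j)%:Z else 0).

(* The semigroup polynomial P_S = (1 - x) sum_{s in S} x^s : all its
   coefficients of index > nsg_bound vanish, so it is this polynomial. *)
Definition semigroup_poly (S : numerical_semigroup) : {poly int} :=
  \poly_(i < (nsg_bound S).+1) sgp_coef S i.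

(* Complex roots of an integer
   polynomial are algebraic, so we quantify over algC. *)
Definition cyclotomic_int_poly (p : {poly int}) : Prop :=
  forall z : algC, root (map_poly intr p) z -> `|z| <= 1.

Definition cyclotomic_semigroup (S : numerical_semigroup) : Prop :=
  cyclotomic_int_poly (semigroup_poly S).

Definition selfreciprocal (p : {poly int}) : Prop :=
  forall x : algC, x != 0 ->
    x ^+ (size p).-1 * (map_poly intr p).[x^-1] = (map_poly intr p).[x].

From mathcomp Require Import all_boot all_order all_algebra all_field.
Import Order.TTheory GRing.Theory Num.Theory.
Local Open Scope ring_scope.

(* P_S is monic with constant term 1, so by Vieta the product of the norms of
   its roots is 1.  If all roots lie in the closed unit disc they must
   therefore all lie on the unit circle, where 1/z is the conjugate of z.
   Hence x^n P(1/x) = P(0) * conj(P(conj x)) = P(x), the last step because P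
   has real (integer) coefficients. *)

Lemma coef_semigroup_poly S i : (semigroup_poly S)`_i = sgp_coef S i.
Proof.
rewrite coef_poly; case: ltnP => // bound_lt_i.
case: i bound_lt_i => // j bound_le_j.
by rewrite /sgp_coef !nsg_boundP ?subrr // leqW.
Qed.

Lemma semigroup_poly_coef0 S : (semigroup_poly S)`_0 = 1.
Proof. by rewrite coef_semigroup_poly /sgp_coef nsg_0 subr0. Qed.

Lemma semigroup_poly_neq0 S : semigroup_poly S != 0.
Proof. by apply/eqP => p0; have := semigroup_poly_coef0 S; rewrite p0 coef0. Qed.

(* Beyond the degree of P_S the coefficients vanish, so membership in S is
   constant from the degree on; it is eventually true. *)
Lemma mem_semigroup_ge_deg S n :
  ((size (semigroup_poly S)).-1 <= n)%N -> nsg_mem S n.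
Proof.
set k := (size _).-1 => k_le_n.
have step m : (k <= m)%N -> nsg_mem S m.+1 = nsg_mem S m.
  move=> k_le_m; have : (semigroup_poly S)`_m.+1 = 0.
    by apply: nth_default; rewrite (leq_trans (leqSpred _)).
  rewrite coef_semigroup_poly /sgp_coef => /eqP; rewrite subr_eq0.
  by case: (nsg_mem S m.+1); case: (nsg_mem S m).
suff -> : nsg_mem S n = nsg_mem S (n + nsg_bound S)%N by apply/nsg_boundP/leq_addl.
elim: (nsg_bound S) => [|b IH]; first by rewrite addn0.
by rewrite addnS step ?IH // (leq_trans k_le_n) ?leq_addr.
Qed.

Lemma semigroup_poly_monic S : semigroup_poly S \is monic.
Proof.
apply/monicP; have := semigroup_poly_neq0 S; rewrite -lead_coef_eq0.
rewrite lead_coefE coef_semigroup_poly /sgp_coef mem_semigroup_ge_deg //.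
by case: (size _).-1 => [|k] //; case: (nsg_mem S k); rewrite ?subr0.
Qed.

Lemma norm_eq1_of_prod_eq1 (R : numDomainType) (r : seq R) :
  (forall z, z \in r -> `|z| <= 1) -> \prod_(z <- r) `|z| = 1 ->
  forall z, z \in r -> `|z| = 1.
Proof.
elim: r => [|a r IH] //= r_le1; rewrite big_cons => prod1.
have a_le1 : `|a| <= 1 by apply: r_le1; rewrite mem_head.
have r'_le1 z : z \in r -> `|z| <= 1 by move=> zr; apply: r_le1; rewrite inE zr orbT.
have prod_le1 : \prod_(z <- r) `|z| <= 1.
  by rewrite big_seq; apply: prodr_ile1 => z zr; rewrite normr_ge0 r'_le1.
have a1 : `|a| = 1.
  apply/le_anti; rewrite a_le1 -prod1 -[leRHS]mulr1.
  by rewrite ler_wpM2l ?normr_ge0.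
move: prod1; rewrite a1 mul1r => prod1 z; rewrite inE => /orP[/eqP -> //|].
exact: IH.
Qed.

Lemma monic_root_disc_unit (q : {poly algC}) :
  q \is monic -> (forall z, root q z -> `|z| <= 1) -> `|q.[0]| = 1 ->
  forall z, root q z -> `|z| = 1.
Proof.
move=> /monicP q_monic roots_le1 q0_unit.
have [r] := closed_field_poly_normal q; rewrite q_monic scale1r => qE.
move: roots_le1; rewrite qE => roots_le1 z; rewrite root_prod_XsubC.
apply: norm_eq1_of_prod_eq1 => [y yr|].
  by apply: roots_le1; rewrite root_prod_XsubC.
rewrite -[RHS]q0_unit qE horner_prod normr_prod.
by apply: eq_bigr => y _; rewrite hornerXsubC sub0r normrN.
Qed.

Lemma prod_recip_unit (r : seq algC) (x : algC) :
  x != 0 -> (forall z, z \in r -> `|z| = 1) ->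
  x ^+ size r * \prod_(z <- r) (x^-1 - z) =
  \prod_(z <- r) (- z) * (\prod_(z <- r) (x^* - z))^*.
Proof.
move=> x0; elim: r => [|a r IH] r_unit.
  by rewrite !big_nil expr0 mulr1 conjC1 mulr1.
have aa' : a * a^* = 1 by rewrite -normCK r_unit ?mem_head ?expr1n.
rewrite !big_cons exprS rmorphM rmorphB /= conjCK.
rewrite mulrACA IH => [|z zr]; last by apply: r_unit; rewrite inE zr orbT.
have -> : x * (x^-1 - a) = - a * (x - a^*).
  by rewrite mulrBr mulfV // -aa' mulNr mulrBr opprB [x * a]mulrC.
by rewrite mulrACA.
Qed.

Lemma monic_real_unit_roots_recip (q : {poly algC}) (x : algC) :
  q \is monic -> map_poly Num.conj q = q -> (forall z, root q z -> `|z| = 1) ->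
  x != 0 -> x ^+ (size q).-1 * q.[x^-1] = q.[0] * q.[x].
Proof.
move=> /monicP q_monic q_real roots_unit x0.
have [r] := closed_field_poly_normal q; rewrite q_monic scale1r => qE.
have qhE y : q.[y] = \prod_(z <- r) (y - z).
  by rewrite qE horner_prod; apply: eq_bigr => z _; rewrite hornerXsubC.
have -> : q.[x] = (q.[x^*])^*.
  by rewrite -{1}q_real -{1}[x]conjCK horner_map.
rewrite {1}qE size_prod_XsubC !qhE prod_recip_unit // => [|z zr].
  by congr (_ * _); apply: eq_bigr => z _; rewrite sub0r.
by apply: roots_unit; rewrite qE root_prod_XsubC.
Qed.

Theorem corollary2 (S : numerical_semigroup) :
  cyclotomic_semigroup S -> selfreciprocal (semigroup_poly S).
Proof.
move=> roots_disc x x0; set q := map_poly intr (semigroup_poly S).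
have q_monic : q \is monic by apply/monic_map/semigroup_poly_monic.
have q_real : map_poly Num.conj q = q.
  by rewrite -map_poly_comp; apply: eq_map_poly => n /=; rewrite rmorph_int.
have q0 : q.[0] = 1 by rewrite horner_coef0 coef_map semigroup_poly_coef0.
have <- : size q = size (semigroup_poly S).
  by rewrite size_map_poly_id0 // (monicP (semigroup_poly_monic S)) rmorph1 oner_eq0.
rewrite monic_real_unit_roots_recip ?q0 ?mul1r //.
by apply: monic_root_disc_unit; rewrite ?q0 ?normr1.
Qed.
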